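(* Let $A$ be the structure matrix of a fully connected $L$-layer ReLU multilayer perceptron (as described in the context) with $m$ weights and $H$ hidden nodes. Then $\operatorname{rank}(A)=m-H$.
   Context: Network: fix $L\ge 2$ and integers $h_0=d,h_1,\dots,h_{L-1},h_L=K\ge 1$. Layer $l$ has nodes $O^l_1,\dots,O^l_{h_l}$; consecutive layers are fully connected by edges $O^{l-1}_i\to O^l_j$ carrying weights $w^l(i,j)$, with no biases, so there are $m=\sum_{l=1}^L h_{l-1}h_l$ edges/weights, indexed $1,\dots,m$. The hidden nodes are the nodes of layers $1,\dots,L-1$; their number is $H=\sum_{l=1}^{L-1}h_l$. Activations are ReLU, $\sigma(t)=\max(t,0)$. Paths and structure matrix: a path is a tuple $(i_0,\dots,i_L)$ with $i_l\in\{1,\dots,h_l\}$, i.e. a choice of one node per layer; it uses the $L$ edges $O^{l-1}_{i_{l-1}}\to O^l_{i_l}$. Represent a path by the vector $p\in\{0,1\}^m$ with $p_e=1$ iff edge $e$ is used by the path. The structure matrix $A$ is the $m\times n$ matrix whose columns are the vectors $p$ of all $n=\prod_{l=0}^L h_l$ paths, and its rank is the maximal number of linearly independent columns over $\mathbb{R}$. (The paper phrases this in the ''generalized linear space'' $(\mathbb{R}\setminus\{0\})^m$ with addition $w\oplus w'=(w_1w'_1,\dots,w_mw'_m)$ and scalar multiplication $\alpha\odot w=(\operatorname{sgn}(w_i)|w_i|^{\ln\alpha})_i$ for $\alpha>0$, encoding a path with entries $e$ on used edges and $1$ elsewhere; linear (in)dependence of path vectors there is the same as real linear (in)dependence of the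 corresponding $0/1$ vectors.) *)

From HB Require Import structures.
From mathcomp Require Import all_boot all_order all_algebra.
Set Implicit Arguments. Unset Strict Implicit. Unset Printing Implicit Defensive.
Import Order.TTheory GRing.Theory Num.Theory.

(* Network with L layers of weights; node layers are numbered 0..L and
   layer l has h l nodes (h 0 = d, h L = K).  Nodes of layer l are 'I_(h l)
   (0-based). *)

(* An edge/weight: l : 'I_L stands for the edge layer from node layer l
   to node layer l+1 (i.e. the paper's w^{l+1}); (i, j) are the endpoints. *)
Definition edge (L : nat) (h : nat -> nat) : finType :=
  {l : 'I_L & ('I_(h l) * 'I_(h l.+1))%type}.

Definition path_t (L : nat) (h : nat -> nat) : finType :=
  {dffun forall l : 'I_L.+1, 'I_(h l)}.

Definition uses (L : nat) (h : nat -> nat) (p : path_t L h) (e : edge L h) : bool :=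
  let l := tag e in
  (nat_of_ord (p (inord l)) == nat_of_ord (tagged e).1) &&
  (nat_of_ord (p (inord l.+1)) == nat_of_ord (tagged e).2).

Definition structure_matrix (R : nzRingType) (L : nat) (h : nat -> nat)
  : 'M[R]_(#|edge L h|, #|path_t L h|) :=
  \matrix_(e < #|edge L h|, p < #|path_t L h|)
     (if uses (enum_val p) (enum_val e) then 1%R else 0%R).

Definition num_weights (L : nat) (h : nat -> nat) : nat :=
  \sum_(l < L) h l * h l.+1.
Definition num_hidden (L : nat) (h : nat -> nat) : nat :=
  \sum_(1 <= l < L) h l.

From HB Require Import structures.
From mathcomp Require Import all_boot all_order all_algebra.
From mathcomp Require Import zify.
Set Implicit Arguments. Unset Strict Implicit. Unset Printing Implicit Defensive.
Import GRing.Theory.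

(* A row vector u of edge weights lies in the left kernel of the structure
   matrix iff the sum of u along every path vanishes.  A potential c on the
   hidden nodes, extended by 0 to the input and output layers, yields such a u
   through its coboundary u e = c (target e) - c (source e), because the sum
   telescopes along each path; and the coboundary of c vanishes only for c = 0,
   by propagation from the input layer.  Conversely, if every path sum of u
   vanishes, the sum of u over the first l edges of a path depends only on the
   node it visits at layer l; this potential has coboundary u.  So the left
   kernel has dimension H and the rank is m - H. *)

Local Open Scope ring_scope.

Lemma rank_eq_sub_left_kernel (F : fieldType) m n k
    (A : 'M[F]_(m, n)) (D : 'M[F]_(k, m)) :
  row_free D -> D *m A = 0 -> (kermx A <= D)%MS -> \rank A = (m - k)%N.
Proof.
move=> /eqP rankD DA0 kerA_D.
have kerA_eqD : (kermx A == D)%MS by rewrite kerA_D sub_kermx DA0 /=.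
by rewrite -rankD -(eqmx_rank kerA_eqD) mxrank_ker subKn // rank_leq_row.
Qed.

Section Network.
Variables (L : nat) (h : nat -> nat).

Local Notation edge := (edge L h).
Local Notation path := (path_t L h).
(* Nodes are (layer, index) pairs of naturals, which avoids comparing
   ordinals of the dependent types 'I_(h l). *)
Local Notation node := (nat * nat)%type.

Definition esrc (e : edge) : node := (val (tag e), val (tagged e).1).
Definition etgt (e : edge) : node := ((val (tag e)).+1, val (tagged e).2).
Definition pnode (p : path) (k : nat) : nat := val (p (inord k)).

Lemma esrc_etgt_inj (e e' : edge) : esrc e = esrc e' -> etgt e = etgt e' -> e = e'.
Proof.
case: e => l [i j]; case: e' => l' [i' j']; rewrite /esrc /etgt /=.
by case=> /val_inj ll'; subst l' => /val_inj -> [/val_inj ->].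
Qed.

Lemma exists_edge l i j : (l < L)%N -> (i < h l)%N -> (j < h l.+1)%N ->
  exists e : edge, esrc e = (l, i) /\ etgt e = (l.+1, j).
Proof.
move=> lL ih jh.
by exists (existT (fun l : 'I_L => ('I_(h l) * 'I_(h l.+1))%type) (Ordinal lL)
  (Ordinal ih, Ordinal jh)).
Qed.

Lemma pnode_lt p k : (k <= L)%N -> (pnode p k < h k)%N.
Proof. by rewrite /pnode; case: (p (inord k)) => x /= + kL; rewrite inordK. Qed.

Definition hidden : finType := {k : 'I_L.-1 & 'I_(h k.+1)}.

Definition hnode (v : hidden) : node := ((val (tag v)).+1, val (tagged v)).

Lemma hnode_inj : injective hnode.
Proof.
case=> l i [l' i']; rewrite /hnode /=.
by case=> /val_inj ll'; subst l' => /val_inj ->.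
Qed.

Lemma hnode_layer v : (0 < (hnode v).1 < L)%N.
Proof. by case: v => -[l /= lL] _; rewrite /hnode /=; lia. Qed.

Lemma hnodeP k n : (0 < k < L)%N -> (n < h k)%N -> exists v, hnode v = (k, n).
Proof.
case: k => [|k] // /andP[_ kL] nh; have kL' : (k < L.-1)%N by lia.
by exists (existT (fun k : 'I_L.-1 => 'I_(h k.+1)) (Ordinal kL') (Ordinal nh)).
Qed.

Hypothesis h_pos : forall k, (k <= L)%N -> (0 < h k)%N.

Definition path_of (f : nat -> nat) : path :=
  finfun (fun k : 'I_L.+1 => insubd (Ordinal (h_pos (ltn_ord k))) (f k)).

Definition admissible (f : nat -> nat) := forall k, (k <= L)%N -> (f k < h k)%N.

Lemma pnode_path_of f k : admissible f -> (k <= L)%N -> pnode (path_of f) k = f k.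
Proof.
move=> adm_f kL; rewrite /pnode ffunE val_insubd.
have -> : (f (inord k : 'I_L.+1) < h (inord k : 'I_L.+1))%N by rewrite inordK ?adm_f.
by rewrite inordK.
Qed.

Definition spike (x : node) : nat -> nat := fun k => if k == x.1 then x.2 else 0%N.

Lemma admissible_spike l i : (i < h l)%N -> admissible (spike (l, i)).
Proof. by move=> ih k kL; rewrite /spike /=; case: eqP => [->|_]; last exact: h_pos. Qed.

Section PathSums.
Variable V : zmodType.
Implicit Types (u : edge -> V) (c : hidden -> V).

Definition path_sum u (p : path) : V := \sum_(e | uses p e) u e.

Definition weight u (x y : node) : V := \sum_(e | (esrc e == x) && (etgt e == y)) u e.

Lemma weight_edge u e : weight u (esrc e) (etgt e) = u e.
Proof.
rewrite /weight (big_pred1 e) // => e' /=.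
apply/andP/eqP=> [[/eqP s_e' /eqP t_e']|->]; last by [].
exact: esrc_etgt_inj.
Qed.

Lemma path_sum_layers u p :
  path_sum u p = \sum_(0 <= l < L) weight u (l, pnode p l) (l.+1, pnode p l.+1).
Proof.
rewrite big_mkord /weight; under eq_bigr do rewrite big_mkcond.
rewrite exchange_big /path_sum big_mkcond; apply: eq_bigr => e _.
rewrite (bigD1 (tag e)) //= big1 => [|l ne_l].
  by rewrite /esrc /etgt !xpair_eqE !eqxx /= addr0 ![_ == pnode _ _]eq_sym.
by rewrite /esrc xpair_eqE val_eqE eq_sym (negbTE ne_l).
Qed.

Lemma path_sum_coboundary (phi : node -> V) p :
  path_sum (fun e => phi (etgt e) - phi (esrc e)) p = phi (L, pnode p L) - phi (0%N, pnode p 0).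
Proof.
rewrite path_sum_layers (telescope_sumr_eq (fun k => phi (k, pnode p k))) // => l /andP[_ lL].
have [e [<- <-]] := exists_edge lL (pnode_lt p (ltnW lL)) (pnode_lt p lL).
by rewrite weight_edge.
Qed.

Definition extend c (x : node) : V := \sum_(v | hnode v == x) c v.

Lemma extend_hnode c v : extend c (hnode v) = c v.
Proof. by rewrite /extend (big_pred1 v) // => w; rewrite /= (inj_eq hnode_inj). Qed.

Lemma eq_extend (c1 c2 : hidden -> V) : c1 =1 c2 -> extend c1 =1 extend c2.
Proof. by move=> c12 x; apply: eq_bigr. Qed.

Lemma extend_eq0 c x : ~~ (0 < x.1 < L)%N -> extend c x = 0.
Proof.
move=> x_out; rewrite /extend big_pred0 // => v.
by apply: contraNF x_out => /eqP <-; apply: hnode_layer.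
Qed.

Lemma path_sum_extend_coboundary c p :
  path_sum (fun e => extend c (etgt e) - extend c (esrc e)) p = 0.
Proof. by rewrite path_sum_coboundary !extend_eq0 ?subrr //= ltnn andbF. Qed.

Lemma extend_inj c : (forall e, extend c (etgt e) = extend c (esrc e)) ->
  forall v, c v = 0.
Proof.
move=> c_closed v; rewrite -extend_hnode.
suff extend_c0 : forall k n, (k < L)%N -> (n < h k)%N -> extend c (k, n) = 0.
  by apply: extend_c0; [case/andP: (hnode_layer v) | exact: ltn_ord].
elim=> [|k IHk] n kL nh; first by rewrite extend_eq0.
have h_k_pos := h_pos (ltnW (ltnW kL)).
have [e [src_e <-]] := exists_edge (ltnW kL) h_k_pos nh.
by rewrite c_closed src_e IHk // ltnW.
Qed.

Definition prefix_sum u (f : nat -> nat) (l : nat) : V :=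
  \sum_(0 <= k < l) weight u (k, f k) (k.+1, f k.+1).

Definition potential u (x : node) : V := prefix_sum u (spike x) x.1.

Lemma path_sum_path_of u f : admissible f -> path_sum u (path_of f) = prefix_sum u f L.
Proof.
move=> adm_f; rewrite path_sum_layers; apply: eq_big_nat => k /andP[_ kL].
by rewrite !pnode_path_of // ltnW.
Qed.

Lemma potential_input u i : potential u (0%N, i) = 0.
Proof. by rewrite /potential /prefix_sum big_geq. Qed.

Section PathKernel.
Variable u : edge -> V.
Hypothesis path_sum_u : forall p, path_sum u p = 0.

Lemma prefix_sum_eq_suffix f g l : admissible f -> admissible g -> (l <= L)%N ->
  (forall k, (l <= k)%N -> f k = g k) -> prefix_sum u f l = prefix_sum u g l.
Proof.
move=> adm_f adm_g lL fg.
have split_at f' : prefix_sum u f' L =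
    prefix_sum u f' l + \sum_(l <= k < L) weight u (k, f' k) (k.+1, f' k.+1).
  exact: big_cat_nat.
have := path_sum_path_of u adm_f; have := path_sum_path_of u adm_g.
rewrite !path_sum_u !split_at.
have -> : \sum_(l <= k < L) weight u (k, f k) (k.+1, f k.+1) =
          \sum_(l <= k < L) weight u (k, g k) (k.+1, g k.+1).
  by apply: eq_big_nat => k /andP[lk _]; rewrite !fg // leqW.
set suffix := \sum_(l <= k < L) _.
by move=> sum_g sum_f; apply: (addIr suffix); rewrite -sum_f -sum_g.
Qed.

Lemma potential_output i : (i < h L)%N -> potential u (L, i) = 0.
Proof.
by move=> ih; rewrite /potential /= -path_sum_path_of ?path_sum_u //; apply: admissible_spike.
Qed.

Lemma weight_potential l i j : (l < L)%N -> (i < h l)%N -> (j < h l.+1)%N ->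
  weight u (l, i) (l.+1, j) = potential u (l.+1, j) - potential u (l, i).
Proof.
(* The path f through (l, i) and (l.+1, j) agrees with spike (l, i) below
   layer l.+1 and with spike (l.+1, j) from layer l.+1 on. *)
move=> lL ih jh; pose f k := if k == l.+1 then j else spike (l, i) k.
have adm_f : admissible f.
  by move=> k kL; rewrite /f; case: eqP => [->|_]; last exact: admissible_spike.
have prefix_l : prefix_sum u f l = potential u (l, i).
  apply: eq_big_nat => k /andP[_ kl].
  by rewrite /f eqSS !(ltn_eqF kl) (ltn_eqF (leqW kl)).
have prefix_l1 : prefix_sum u f l.+1 = potential u (l.+1, j).
  apply: prefix_sum_eq_suffix => // [|k lk]; first exact: admissible_spike.
  by rewrite /f /spike /= (gtn_eqF lk).
rewrite -prefix_l1 -prefix_l /prefix_sum big_nat_recr //= addrC addrK.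
by rewrite /f eqxx (ltn_eqF (ltnSn l)) /spike /= eqxx.
Qed.

Lemma coboundary_potential e : u e = potential u (etgt e) - potential u (esrc e).
Proof. by rewrite -weight_edge weight_potential ?ltn_ord. Qed.

Lemma extend_potential x :
  (x.1 <= L)%N -> (x.2 < h x.1)%N -> extend (potential u \o hnode) x = potential u x.
Proof.
case: x => k n /= kL nh.
have [k0|k_pos] := posnP k; first by rewrite k0 extend_eq0 ?potential_input.
have [kL'|Lk] := ltnP k L.
  by have [v <-] := hnodeP (introT andP (conj k_pos kL')) nh; rewrite extend_hnode.
have k_L : k = L by apply/eqP; rewrite eqn_leq kL Lk.
by subst k; rewrite extend_eq0 ?potential_output // ltnn andbF.
Qed.

End PathKernel.

End PathSums.

Section Matrices.
Variable F : fieldType.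
Local Notation A := (structure_matrix F L h).

Lemma mulmx_structure_matrix k (M : 'M[F]_(k, #|edge|)) i j :
  (M *m A) i j = path_sum (fun e => M i (enum_rank e)) (enum_val j).
Proof.
rewrite mxE /path_sum [RHS]big_mkcond (big_enum_val (A := edge)) /=.
by apply: eq_bigr => e _; rewrite !mxE enum_valK; case: uses; rewrite ?mulr1 ?mulr0.
Qed.

Definition coboundary_mx : 'M[F]_(#|hidden|, #|edge|) :=
  \matrix_(v, e) ((hnode (enum_val v) == etgt (enum_val e))%:R -
                  (hnode (enum_val v) == esrc (enum_val e))%:R).

Lemma mul_coboundary_mx (r : 'rV[F]_#|hidden|) e :
  (r *m coboundary_mx) 0 (enum_rank e) =
  extend (fun v => r 0 (enum_rank v)) (etgt e) - extend (fun v => r 0 (enum_rank v)) (esrc e).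
Proof.
rewrite mxE /extend [X in _ - X]big_mkcond [X in _ = X - _]big_mkcond -sumrB.
rewrite (big_enum_val (A := hidden)) /=; apply: eq_bigr => v _.
by rewrite !mxE enum_rankK !enum_valK mulrBr !mulr_natr !mulrb.
Qed.

Lemma coboundary_mx_mul_structure : coboundary_mx *m A = 0.
Proof.
apply/row_matrixP => i; rewrite row_mul rowE row0.
apply/rowP => j; rewrite mulmx_structure_matrix mxE /path_sum.
under eq_bigr do rewrite mul_coboundary_mx.
exact: path_sum_extend_coboundary.
Qed.

Lemma kermx_structure_sub_coboundary : (kermx A <= coboundary_mx)%MS.
Proof.
apply/row_subP => i; set r := row i (kermx A).
have rA0 : r *m A = 0 by rewrite -row_mul mulmx_ker row0.
pose u (e : edge) : F := r 0 (enum_rank e).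
have u_ker p : path_sum u p = 0.
  by rewrite -[p]enum_rankK -mulmx_structure_matrix rA0 mxE.
pose c : 'rV[F]_#|hidden| := \row_v potential u (hnode (enum_val v)).
have c_pot : (fun v => c 0 (enum_rank v)) =1 potential u \o hnode.
  by move=> v; rewrite mxE enum_rankK.
apply/submxP; exists c; apply/rowP => e.
rewrite -[e]enum_valK mul_coboundary_mx !(eq_extend c_pot).
rewrite !(extend_potential u_ker) /= ?ltn_ord // ?(ltnW (ltn_ord _)) //.
exact: coboundary_potential u_ker (enum_val e).
Qed.

Lemma coboundary_mx_free : row_free coboundary_mx.
Proof.
apply/inj_row_free => r rD0; apply/rowP => v; rewrite mxE -[v]enum_valK.
apply: (extend_inj (c := fun w => r 0 (enum_rank w))) => e.
by apply/eqP; rewrite -subr_eq0 -mul_coboundary_mx rD0 mxE.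
Qed.

Lemma rank_structure_matrix : \rank A = (#|edge| - #|hidden|)%N.
Proof.
apply: rank_eq_sub_left_kernel.
- exact: coboundary_mx_free.
- exact: coboundary_mx_mul_structure.
- exact: kermx_structure_sub_coboundary.
Qed.

End Matrices.

Lemma card_edge : #|edge| = num_weights L h.
Proof.
rewrite /num_weights card_tagged sumnE big_map big_enum /=.
by apply: eq_bigr => l _; rewrite card_prod !card_ord.
Qed.

Lemma card_hidden : #|hidden| = num_hidden L h.
Proof.
rewrite /num_hidden card_tagged sumnE big_map big_enum /=.
under eq_bigr do rewrite card_ord.
by rewrite big_add1 /= big_mkord.
Qed.

End Network.

Theorem theorem3p4 (R : realFieldType) (L : nat) (h : nat -> nat) :
  (2 <= L)%N -> (forall l, (l <= L)%N -> (1 <= h l)%N) ->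
  \rank (structure_matrix R L h) = (num_weights L h - num_hidden L h)%N.
Proof.
by move=> _ h_pos; rewrite (rank_structure_matrix h_pos) card_edge card_hidden.
Qed.
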